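(* Let $S$ be a set of places of $\mathbb{Q}$ and let $X$ be the set of places of $\overline{\mathbb{Q}}$ dividing a place in $S$. If $f\in LC_c(X)$, then there exists a number field $K$ such that $f$ is constant on $Y(K,v)$ for every $v\in M_K(S)$. Moreover, that constant value is $0$ for all but finitely many $v\in M_K(S)$.
   Context: Fix an algebraic closure $\overline{\mathbb{Q}}$ of $\mathbb{Q}$; number fields are finite extensions of $\mathbb{Q}$ inside $\overline{\mathbb{Q}}$. Let $Y$ be the set of all places of $\overline{\mathbb{Q}}$. For a number field $K$ and a place $v$ of $K$, put $Y(K,v)=\{y\in Y: y\mid v\}$. $Y$ carries the topology having $\{Y(K,v): [K:\mathbb{Q}]<\infty,\ v \text{ a place of } K\}$ as a basis (it is locally compact, totally disconnected and Hausdorff), and $X\subseteq Y$ carries the subspace topology. For a number field $K$, $M_K(S)$ denotes the set of places of $K$ dividing a place in $S$. $LC_c(X)$ denotes the set of locally constant functions $X\to\mathbb{R}$ with compact support. *)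

From HB Require Import structures.
From mathcomp Require Import all_boot all_order all_algebra.
From mathcomp Require Import algC.
From mathcomp Require Import boolp classical_sets cardinality reals exp.
Set Implicit Arguments. Unset Strict Implicit. Unset Printing Implicit Defensive.
Import Order.TTheory GRing.Theory Num.Theory.
Local Open Scope ring_scope.
Local Open Scope classical_set_scope.

(* Qbar is modelled by algC (algebraic closure of Q in C).  Subfields of
   algC are given as subsets K : set algC. *)

Section Places.
Variable R : realType.

Definition is_subfield (K : set algC) : Prop :=
  K 0 /\ K 1 /\ (forall x y, K x -> K y -> K (x - y)) /\
  (forall x y, K x -> K y -> K (x * y)) /\ (forall x, K x -> K x^-1).

Definition number_field (K : set algC) : Prop :=
  is_subfield K /\
  exists (n : nat) (b : 'I_n -> algC),
    forall x, K x -> exists q : 'I_n -> rat, x = \sum_(i < n) ratr (q i) * b i.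

Definition Qfield : set algC := [set x | exists q : rat, x = ratr q].

(* absolute value on the field K (only values on K matter) *)
Definition is_absval (K : set algC) (phi : algC -> R) : Prop :=
  (forall x, K x -> 0 <= phi x) /\
  (forall x, K x -> (phi x = 0 <-> x = 0)) /\
  (forall x y, K x -> K y -> phi (x * y) = phi x * phi y) /\
  (forall x y, K x -> K y -> phi (x + y) <= phi x + phi y).

Definition nontrivial_absval (K : set algC) (phi : algC -> R) : Prop :=
  exists x, K x /\ x <> 0 /\ phi x <> 1.

Definition equiv_absval (K : set algC) (phi psi : algC -> R) : Prop :=
  exists c : R, 0 < c /\ forall x, K x -> psi x = phi x `^ c.

Definition is_place (K : set algC) (v : set (algC -> R)) : Prop :=
  exists phi, is_absval K phi /\ nontrivial_absval K phi /\
    v = [set psi | is_absval K psi /\ nontrivial_absval K psi /\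
                   equiv_absval K phi psi].

(* w | v : some (equivalently every) absolute value in w restricts to
   an absolute value in v *)
Definition place_divides (w v : set (algC -> R)) : Prop :=
  exists phi, w phi /\ v phi.

Definition Yplaces : set (set (algC -> R)) := is_place setT.

Definition Ybasic (v : set (algC -> R)) : set (set (algC -> R)) :=
  [set y | Yplaces y /\ place_divides y v].

Definition Yopen (U : set (set (algC -> R))) : Prop :=
  U `<=` Yplaces /\
  forall y, U y -> exists K v, number_field K /\ is_place K v /\
     Ybasic v y /\ Ybasic v `<=` U.

Definition MK (K : set algC) (S : set (set (algC -> R))) : set (set (algC -> R)) :=
  [set v | is_place K v /\ exists s, S s /\ place_divides v s].

Definition Xover (S : set (set (algC -> R))) : set (set (algC -> R)) :=
  [set y | Yplaces y /\ exists s, S s /\ place_divides y s].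

Definition locally_constant (X : set (set (algC -> R)))
    (f : set (algC -> R) -> R) : Prop :=
  forall x, X x -> exists U, Yopen U /\ U x /\
    forall z, X z -> U z -> f z = f x.

(* support of f in X: closure in X of {x in X | f x <> 0} *)
Definition support (X : set (set (algC -> R))) (f : set (algC -> R) -> R)
    : set (set (algC -> R)) :=
  [set x | X x /\ forall U, Yopen U -> U x ->
     exists z, X z /\ U z /\ f z <> 0].

Definition compact_in (X C : set (set (algC -> R))) : Prop :=
  C `<=` X /\
  forall (I : Type) (U : I -> set (set (algC -> R))),
    (forall i, Yopen (U i)) -> C `<=` \bigcup_i (U i `&` X) ->
    exists F : set I, finite_set F /\ C `<=` \bigcup_(i in F) (U i `&` X).

Definition LCc (X : set (set (algC -> R))) (f : set (algC -> R) -> R) : Prop :=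
  locally_constant X f /\ compact_in X (support X f).

End Places.

From Pilot Require Import Defs.
From HB Require Import structures.
From mathcomp Require Import all_boot all_order all_algebra.
From mathcomp Require Import algC.
From mathcomp Require Import boolp classical_sets cardinality reals exp.
From mathcomp Require Import finmap vector falgebra fieldext algnum.
Import Order.TTheory GRing.Theory Num.Theory.
Local Open Scope ring_scope.
Local Open Scope classical_set_scope.

(* Cover the compact support of f by finitely many basic opens Y(K_i, v_i) on
   which f is constant, and let K be the compositum of the K_i.  A basic open
   Y(K, v) meeting some Y(K_i, v_i) lies inside it because K_i is a subfield of
   K, so f is constant on every Y(K, v) meeting the support and vanishes on
   the others.  The Y(K, w), w a place of K, partition X, so by compactness
   only finitely many of them meet the support. *)

Set Implicit Arguments.
Unset Strict Implicit.

Section Subfields.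

Implicit Types (K L : set algC) (s : seq algC).

Lemma subfield_add K x y : is_subfield K -> K x -> K y -> K (x + y).
Proof.
move=> [K0 [_ [KB _]]] Kx Ky.
by have := KB x (0 - y) Kx (KB 0 y K0 Ky); rewrite sub0r opprK.
Qed.

Lemma subfield_ratr K q : is_subfield K -> K (ratr q).
Proof.
move=> sK; have [K0 [K1 [KB [KM KV]]]] := sK.
have Knat n : K n%:R.
  by elim: n => [|n IHn] //; rewrite mulrS; exact: subfield_add.
have Kint (z : int) : K z%:~R.
  case: z => n; first exact: Knat.
  by rewrite NegzE mulrNz -sub0r; exact: KB K0 (Knat n.+1).
by apply: KM; [exact: Kint | apply: KV; exact: Kint].
Qed.

Lemma number_field_generators L : number_field L ->
  exists s, forall K, is_subfield K -> (forall z, z \in s -> K z) -> L `<=` K.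
Proof.
move=> [_ [n [b Lb]]]; exists [seq b i | i <- enum 'I_n] => K sK Kb x /Lb[q ->].
have [K0 [_ [_ [KM _]]]] := sK.
apply: (big_ind K) => // [y z|i _]; first exact: subfield_add.
by apply: KM; [exact: subfield_ratr | apply: Kb; apply: map_f; rewrite mem_enum].
Qed.

Lemma number_field_of_seq s : exists2 K, number_field K & forall z, z \in s -> K z.
Proof.
have [Qs [QsC [s1 Ds _]]] := num_field_exists s.
exists [set x | exists a, x = QsC a]; last first.
  by move=> z; rewrite -Ds => /mapP[a _ ->]; exists a.
split.
  split; first by exists 0; rewrite rmorph0.
  split; first by exists 1; rewrite rmorph1.
  split; first by move=> x y [a ->] [c ->]; exists (a - c); rewrite rmorphB.
  split; first by move=> x y [a ->] [c ->]; exists (a * c); rewrite rmorphM.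
  by move=> x [a ->]; exists a^-1; rewrite fmorphV.
exists (\dim (fullv : {vspace Qs})), (fun i => QsC (vbasis fullv)`_i).
move=> x [a ->]; exists (fun i => coord (vbasis fullv) i a).
rewrite {1}(coord_vbasis (memvf a)) rmorph_sum; apply: eq_bigr => i _.
by rewrite -mulr_algl rmorphM alg_num_field fmorph_rat.
Qed.

Lemma number_field_compositum (F : set (set algC)) :
  finite_set F -> (forall L, F L -> number_field L) ->
  exists2 K, number_field K & forall L, F L -> L `<=` K.
Proof.
move=> /finite_fsetP[B ->] nF.
have /choice[gen genP] : forall L, exists s, L \in B ->
    forall K, is_subfield K -> (forall z, z \in s -> K z) -> L `<=` K.
  move=> L; have [LB|_] := boolP (L \in B); last by exists [::].
  by have [s Hs] := number_field_generators (nF L LB); exists s.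
have [K nK Ks] := number_field_of_seq (flatten [seq gen L | L <- B]).
exists K => // L LB; apply: genP (proj1 nK) _ => // z zL; apply: Ks.
by apply/flattenP; exists (gen L) => //; apply: map_f.
Qed.

End Subfields.

Section Places.

Variable R : realType.

Implicit Types (K L : set algC) (phi psi chi : algC -> R) (v w y : set (algC -> R)).
Implicit Types (S X C : set (set (algC -> R))) (f : set (algC -> R) -> R).

Lemma is_absval_sub K L phi : L `<=` K -> is_absval K phi -> is_absval L phi.
Proof.
move=> LK [ge0 [eq0 [mul add]]]; split; [|split; [|split]].
- by move=> x /LK; apply: ge0.
- by move=> x /LK; apply: eq0.
- by move=> x y /LK Kx /LK Ky; apply: mul.
- by move=> x y /LK Kx /LK Ky; apply: add.
Qed.

Lemma equiv_absval_refl K phi : is_absval K phi -> equiv_absval K phi phi.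
Proof.
by move=> [ge0 _]; exists 1; split=> // x Kx; rewrite powRr1 //; exact: ge0.
Qed.

Lemma equiv_absval_sym K phi psi :
  is_absval K phi -> equiv_absval K phi psi -> equiv_absval K psi phi.
Proof.
move=> [ge0 _] [c [c0 Hc]]; exists c^-1; split; first by rewrite invr_gt0.
by move=> x Kx; rewrite Hc // -powRrM mulfV ?gt_eqF // powRr1 //; exact: ge0.
Qed.

Lemma equiv_absval_trans K phi psi chi :
  equiv_absval K phi psi -> equiv_absval K psi chi -> equiv_absval K phi chi.
Proof.
move=> [c [c0 Hc]] [d [d0 Hd]]; exists (c * d); split; first exact: mulr_gt0.
by move=> x Kx; rewrite Hd // Hc // powRrM.
Qed.

Lemma equiv_absval_sub K L phi psi :
  L `<=` K -> equiv_absval K phi psi -> equiv_absval L phi psi.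
Proof. by move=> LK [c [c0 Hc]]; exists c; split => // x /LK; apply: Hc. Qed.

Lemma nontrivial_absval_equiv K phi psi : is_absval K phi ->
  equiv_absval K phi psi -> nontrivial_absval K phi -> nontrivial_absval K psi.
Proof.
move=> Aphi E [x [Kx [x0 phix]]]; exists x; split=> //; split=> // psix.
have [c [_ Hc]] := equiv_absval_sym Aphi E.
by apply: phix; rewrite Hc // psix powR1.
Qed.

Definition place_of K phi : set (algC -> R) :=
  [set psi | is_absval K psi /\ nontrivial_absval K psi /\ equiv_absval K phi psi].

Lemma place_of_is_place K phi :
  is_absval K phi -> nontrivial_absval K phi -> is_place K (place_of K phi).
Proof. by move=> Aphi Nphi; exists phi. Qed.

Lemma place_of_mem K phi :
  is_absval K phi -> nontrivial_absval K phi -> place_of K phi phi.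
Proof. by move=> Aphi Nphi; do 2!split=> //; exact: equiv_absval_refl. Qed.

Lemma absval_of_place K v phi :
  is_place K v -> v phi -> is_absval K phi /\ nontrivial_absval K phi.
Proof. by move=> [phi0 [_ [_ ->]]] [? []]. Qed.

Lemma place_equiv K v phi psi :
  is_place K v -> v phi -> v psi -> equiv_absval K phi psi.
Proof.
move=> [phi0 [A0 [_ ->]]] [_ [_ E]] [_ [_ E']].
exact: equiv_absval_trans (equiv_absval_sym A0 E) E'.
Qed.

Lemma place_equiv_mem K v phi psi : is_place K v -> v phi ->
  is_absval K psi -> equiv_absval K phi psi -> v psi.
Proof.
move=> [phi0 [_ [_ ->]]] [Aphi [Nphi E0]] Apsi E; split=> //; split.
  exact: nontrivial_absval_equiv Aphi E Nphi.
exact: equiv_absval_trans E0 E.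
Qed.

Lemma place_subset K L v w phi psi : L `<=` K -> is_place K v -> is_place L w ->
  v phi -> w psi -> equiv_absval L psi phi -> v `<=` w.
Proof.
move=> LK Hv Hw vphi wpsi E chi vchi; apply: (place_equiv_mem Hw wpsi).
  exact: is_absval_sub LK (absval_of_place Hv vchi).1.
exact: equiv_absval_trans E (equiv_absval_sub LK (place_equiv Hv vphi vchi)).
Qed.

Lemma Yplaces_absval K y phi : Yplaces y -> y phi -> is_absval K phi.
Proof. by move=> Hy yphi; apply: is_absval_sub (absval_of_place Hy yphi).1. Qed.

Lemma Yplaces_equiv K y phi psi :
  Yplaces y -> y phi -> y psi -> equiv_absval K phi psi.
Proof.
by move=> Hy yphi ypsi; apply: equiv_absval_sub (place_equiv Hy yphi ypsi).
Qed.

Lemma Ybasic_place_unique K v w y :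
  is_place K v -> is_place K w -> Ybasic v y -> Ybasic w y -> v = w.
Proof.
move=> Hv Hw [Hy [phi [yphi vphi]]] [_ [psi [ypsi wpsi]]].
have KK := @subset_refl _ K.
apply/seteqP; split.
  exact: place_subset KK Hv Hw vphi wpsi (Yplaces_equiv K Hy ypsi yphi).
exact: place_subset KK Hw Hv wpsi vphi (Yplaces_equiv K Hy yphi ypsi).
Qed.

Lemma Ybasic_sub K L v w y0 : L `<=` K -> is_place K v -> is_place L w ->
  Ybasic v y0 -> Ybasic w y0 -> Ybasic v `<=` Ybasic w.
Proof.
move=> LK Hv Hw [Hy0 [phi [y0phi vphi]]] [_ [psi [y0psi wpsi]]].
move=> y [Hy [chi [ychi vchi]]]; split=> //; exists chi; split=> //.
exact: place_subset LK Hv Hw vphi wpsi (Yplaces_equiv L Hy0 y0psi y0phi) _ vchi.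
Qed.

Lemma Yopen_Ybasic K v : number_field K -> is_place K v -> Yopen (Ybasic v).
Proof.
by move=> nK Hv; split=> [y /proj1 //|y vy]; exists K, v; do 3!split=> //.
Qed.

Lemma exists_place_below K S y : Qfield `<=` K ->
  (forall s, S s -> is_place Qfield s) -> Xover S y ->
  exists2 w, is_place K w & Ybasic w y.
Proof.
move=> QK HS [Hy [s [Ss [phi [yphi sphi]]]]].
have [_ [x [Qx [x0 phix]]]] := absval_of_place (HS s Ss) sphi.
have Aphi : is_absval K phi := Yplaces_absval K Hy yphi.
have Nphi : nontrivial_absval K phi by exists x; split=> //; exact: QK.
exists (place_of K phi); first exact: place_of_is_place.
by split=> //; exists phi; split=> //; exact: place_of_mem.
Qed.

Lemma support_nonzero X f y : X y -> f y <> 0 -> Defs.support X f y.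
Proof. by move=> Xy fy; split=> // U _ Uy; exists y. Qed.

Lemma compact_Ybasic_cover X C (P : set algC -> set (algC -> R) -> Prop) :
  compact_in X C ->
  (forall x, C x -> exists K v, [/\ number_field K, is_place K v, P K v & Ybasic v x]) ->
  exists F : set (set algC * set (algC -> R)), [/\ finite_set F,
    forall p, F p -> [/\ number_field p.1, is_place p.1 p.2 & P p.1 p.2]
    & C `<=` \bigcup_(p in F) Ybasic p.2].
Proof.
move=> [CX cpt] Ccov.
pose I := {p : set algC * set (algC -> R) |
  [/\ number_field p.1, is_place p.1 p.2 & P p.1 p.2]}.
have Iopen (i : I) : Yopen (Ybasic (sval i).2).
  by case: i => [[K v] /= [nK Hv _]]; exact: Yopen_Ybasic nK Hv.
have Icov : C `<=` \bigcup_(i : I) (Ybasic (sval i).2 `&` X).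
  move=> x Cx; have [K [v [nK Hv PKv vx]]] := Ccov x Cx.
  by exists (exist _ (K, v) (And3 nK Hv PKv)) => //; split=> //; exact: CX.
have [G [finG covG]] := cpt I _ Iopen Icov.
exists (sval @` G); split; first exact: finite_image.
  by move=> _ [i _ <-]; exact: (svalP i).
by move=> x /covG[i Gi [vx _]]; exists (sval i) => //; exists i.
Qed.

Lemma constant_on_Ybasic_of_cover X f F K v :
  (forall p, F p -> [/\ p.1 `<=` K, is_place p.1 p.2 &
     exists c, forall y, Ybasic p.2 y -> X y -> f y = c]) ->
  Defs.support X f `<=` \bigcup_(p in F) Ybasic p.2 ->
  is_place K v -> exists c, forall y, Ybasic v y -> X y -> f y = c.
Proof.
move=> HF cov Hv.
have [[y0 [vy0 sy0]]|no] :=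
  pselect (exists y0, Ybasic v y0 /\ Defs.support X f y0).
  have [p Fp py0] := cov y0 sy0; have [LK Hp [c fc]] := HF p Fp.
  by exists c => y vy Xy; apply: fc => //; exact: Ybasic_sub LK Hv Hp vy0 py0 _ vy.
exists 0 => y vy Xy; apply: contra_notP no => fy.
by exists y; split=> //; exact: support_nonzero.
Qed.

Lemma finite_places_meeting_support S f K :
  (forall s, S s -> is_place Qfield s) -> number_field K ->
  compact_in (Xover S) (Defs.support (Xover S) f) ->
  finite_set [set v | is_place K v /\
    exists y, Ybasic v y /\ Xover S y /\ f y <> 0].
Proof.
move=> HS nK cpt.
have QK : Qfield `<=` K by move=> _ [q ->]; exact: subfield_ratr (proj1 nK).
have [F [finF HF cov]] : exists F, [/\ finite_set F,
    forall p, F p -> [/\ number_field p.1, is_place p.1 p.2 & p.1 = K]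
    & Defs.support (Xover S) f `<=` \bigcup_(p in F) Ybasic p.2].
  apply: (compact_Ybasic_cover (P := fun L _ => L = K) cpt) => x [Xx _].
  by have [w Hw wx] := exists_place_below QK HS Xx; exists K, w.
apply: sub_finite_set (finite_image snd finF) => v [Hv [y [vy [Xy fy]]]].
have [p Fp py] := cov y (support_nonzero Xy fy).
have [_ + pK] := HF p Fp; rewrite pK => Hp.
by exists p => //; exact: Ybasic_place_unique Hp Hv py vy.
Qed.

End Places.

Unset Implicit Arguments.
Set Strict Implicit.

Theorem proposition1p1 (R : realType) (S : set (set (algC -> R)))
  (HS : forall s, S s -> is_place Qfield s)
  (f : set (algC -> R) -> R) (Hf : LCc (Xover S) f) :
  exists K : set algC, number_field K /\
    (forall v, MK K S v ->
       exists c : R, forall y, Ybasic v y -> Xover S y -> f y = c) /\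
    finite_set [set v | MK K S v /\
       exists y, Ybasic v y /\ Xover S y /\ f y <> 0].
Proof.
have [lcf cpt] := Hf.
pose const_on v := exists c, forall y, Ybasic v y -> Xover S y -> f y = c.
have lc_cover x : Defs.support (Xover S) f x ->
    exists K v, [/\ number_field K, is_place K v, const_on v & Ybasic v x].
  move=> [Xx _]; have [U [[_ oU] [Ux fU]]] := lcf x Xx.
  have [K [v [nK [Hv [vx vU]]]]] := oU x Ux.
  by exists K, v; split=> //; exists (f x) => y vy Xy; apply: fU => //; exact: vU.
have [F [finF HF cov]] :=
  compact_Ybasic_cover (P := fun _ v => const_on v) cpt lc_cover.
have number_fields_F L : (fst @` F) L -> number_field L.
  by move=> [p Fp <-]; have [] := HF p Fp.
have [K nK FK] := number_field_compositum (finite_image fst finF) number_fields_F.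
exists K; split=> //; split.
  move=> v [Hv _]; apply: constant_on_Ybasic_of_cover cov Hv => p Fp.
  by have [_ Hp fp] := HF p Fp; split=> //; apply: FK; exists p.
apply: sub_finite_set (finite_places_meeting_support HS nK cpt).
by move=> v [[Hv _] nz]; split.
Qed.
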